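(* Let $\theta$ be a positive integer, let $\lambda\in\mathbb{R}\setminus\{0\}$, and let $G$ be a baseline cumulative distribution function. Let $N_1,\dots,N_\theta$ be i.i.d. geometric random variables with $P(N_i=n)=p(1-p)^{n-1}$, $n=1,2,\dots$, for some $p\in(0,1]$. For each $i=1,\dots,\theta$ let $T_{i1},T_{i2},\dots$ be i.i.d. random variables with the Poisson-G distribution, i.e. with survival function $$\bar G^{PG}(t;\lambda)=\frac{e^{-\lambda G(t)}-e^{-\lambda}}{1-e^{-\lambda}},$$ where all the $T_{ij}$ and all the $N_i$ are mutually independent. Put $W_i=\min(T_{i1},\dots,T_{iN_i})$ and $V_i=\max(T_{i1},\dots,T_{iN_i})$. Then: (i) if $0<\alpha\le 1$ and $p=\alpha$, the random variable $\min_{1\le i\le\theta} W_i$ has the $\mathrm{GMOP\text{-}G}(\theta,\alpha,\lambda)$ distribution; (ii) if $\alpha>1$ and $p=1/\alpha$, the random variable $\min_{1\le i\le\theta} V_i$ has the $\mathrm{GMOP\text{-}G}(\theta,\alpha,\lambda)$ distribution.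
   Context: The generalized Marshall–Olkin Poisson-G distribution $\mathrm{GMOP\text{-}G}(\theta,\alpha,\lambda)$ with baseline cdf $G$, parameters $\theta>0$, $\alpha>0$ (write $\bar\alpha=1-\alpha$) and $\lambda\in\mathbb{R}\setminus\{0\}$, is the distribution with survival function $$\bar F(t;\theta,\alpha,\lambda)=\left[\frac{\alpha\left(e^{-\lambda G(t)}-e^{-\lambda}\right)}{1-\alpha e^{-\lambda}-\bar\alpha e^{-\lambda G(t)}}\right]^{\theta}.$$ *)

From HB Require Import structures.
From mathcomp Require Import all_boot all_order all_algebra.
From mathcomp Require Import all_classical all_reals all_analysis.
Set Implicit Arguments. Unset Strict Implicit. Unset Printing Implicit Defensive.
Import Order.TTheory GRing.Theory Num.Theory.
Import numFieldNormedType.Exports.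
Local Open Scope classical_set_scope.
Local Open Scope ring_scope.

Definition is_cdf (R : realType) (G : R -> R) : Prop :=
  [/\ {homo G : x y / x <= y},
      (forall x, G @ at_right x --> G x),
      G @ -oo --> (0 : R) &
      G @ +oo --> (1 : R)].

Definition mutually_independent d (T : measurableType d) (R : realType)
  (P : probability T R) (I : Type) (F : I -> set (set T)) : Prop :=
  forall (n : nat) (k : 'I_n -> I), injective k ->
  forall E : 'I_n -> set T, (forall m, F (k m) (E m)) ->
  P (\bigcap_(m in [set: 'I_n]) E m) = (\prod_(m < n) P (E m))%E.

Definition events_nat d (T : measurableType d) (X : T -> nat) : set (set T) :=
  [set X @^-1` A | A in [set: set nat]].

Definition events_real d (T : measurableType d) (R : realType) (X : T -> R)
  : set (set T) :=
  [set X @^-1` B | B in [set B : set R | measurable B]].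

(* min / max of X_0, ..., X_{N-1} (N >= 1 almost surely; for N = 0 these
   default to X_0, an event of probability zero) *)
Definition min_upto (R : realType) (X : nat -> R) (N : nat) : R :=
  \big[Num.min/X 0%N]_(j < N) X j.
Definition max_upto (R : realType) (X : nat -> R) (N : nat) : R :=
  \big[Num.max/X 0%N]_(j < N) X j.

Definition PG_surv (R : realType) (G : R -> R) (lambda t : R) : R :=
  (expR (- lambda * G t) - expR (- lambda)) / (1 - expR (- lambda)).

Definition GMOP_surv (R : realType) (G : R -> R) (theta : nat)
  (alpha lambda t : R) : R :=
  ((alpha * (expR (- lambda * G t) - expR (- lambda))) /
   (1 - alpha * expR (- lambda) - (1 - alpha) * expR (- lambda * G t)))
  ^+ theta.

From HB Require Import structures.
From mathcomp Require Import all_boot all_order all_algebra.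
From mathcomp Require Import all_classical all_reals all_analysis.
From mathcomp Require Import ring lra.
Import Order.TTheory GRing.Theory Num.Theory.
Import numFieldNormedType.Exports.
Local Open Scope classical_set_scope.
Local Open Scope ring_scope.

(* On {N_i = n} the event {t < W_i} says that the first n samples of block i
   exceed t; it has probability p (1-p)^(n-1) S^n, where S is the Poisson-G
   survival at t, and summing the geometric series gives the Marshall-Olkin
   transform p S / (1 - (1-p) S).  In the same way {t < V_i} has probability
   1 - marshall_olkin p (1 - S), which equals marshall_olkin (1/p) S.  The events
   {t < W_i} are independent because they depend on disjoint blocks of variables.
   Instead of developing independence of generated sigma-algebras we only use
   that the probabilities of intersections of block events
   {N_i = a, X_ij in U for j < b} factor, and replace the block events by the
   events {t < W_i} one block at a time, each being a countable disjoint union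
   of block events.  Finally the GMOP-G survival function is the theta-th power
   of the Marshall-Olkin transform of S. *)

Definition geom_pmf {R : realType} (p : R) (n : nat) : R :=
  if n is m.+1 then p * (1 - p) ^+ m else 0.

Definition marshall_olkin {R : realFieldType} (alpha S : R) : R :=
  alpha * S / (1 - (1 - alpha) * S).

Lemma marshall_olkin_complement {R : realFieldType} (alpha S : R) :
  0 < alpha -> 0 <= S <= 1 ->
  1 - marshall_olkin alpha^-1 (1 - S) = marshall_olkin alpha S.
Proof.
move=> a0 /andP[S0 S1]; rewrite /marshall_olkin.
have D0 : 1 - (1 - alpha) * S != 0 by rewrite gt_eqF //; nra.
by field; rewrite D0 gt_eqF.
Qed.

Lemma GMOP_survE {R : realType} (G : R -> R) theta alpha lambda t :
  lambda != 0 ->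
  GMOP_surv G theta alpha lambda t =
  marshall_olkin alpha (PG_surv G lambda t) ^+ theta.
Proof.
move=> l0; rewrite /GMOP_surv /marshall_olkin /PG_surv; congr (_ ^+ _).
set a := expR (- lambda * G t); set b := expR (- lambda).
set S := (a - b) / (1 - b).
have b1 : 1 - b != 0.
  rewrite subr_eq0 eq_sym -expR0; apply: contra l0 => /eqP/expR_inj/eqP.
  by rewrite oppr_eq0.
have -> : a - b = S * (1 - b) by rewrite divfK.
have -> : 1 - alpha * b - (1 - alpha) * a = (1 - (1 - alpha) * S) * (1 - b).
  by rewrite /S; field.
by rewrite mulrA -mulf_div divff ?mulr1.
Qed.

Section GeometricSeries.
Context {R : realType} {p : R}.
Hypothesis hp : 0 < p <= 1.

Lemma cvg_series_geom_pmf : series (fun m => geom_pmf p m.+1) @ \oo --> (1 : R).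
Proof.
have p1 : `|1 - p| < 1.
  by case/andP: hp => p0 p1; rewrite ger0_norm ?subr_ge0 // ltrBlDr ltrDl.
have := @cvg_geometric_series R p _ p1.
by rewrite subKr divff // gt_eqF //; case/andP: hp.
Qed.

Lemma cvg_series_geom_pmfX {s : R} : 0 <= s <= 1 ->
  series (fun m => geom_pmf p m.+1 * s ^+ m.+1) @ \oo --> marshall_olkin p s.
Proof.
case/andP: hp => p0 p1 /andP[s0 s1].
have z1 : `|(1 - p) * s| < 1.
  rewrite ger0_norm ?mulr_ge0 ?subr_ge0 //.
  apply: (@le_lt_trans _ _ (1 - p)); first by rewrite ler_piMr ?subr_ge0.
  by rewrite ltrBlDr ltrDl.
have -> : (fun m => geom_pmf p m.+1 * s ^+ m.+1) =
    geometric (p * s) ((1 - p) * s).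
  by apply/funext => m; rewrite /= exprMn exprS; ring.
exact: cvg_geometric_series.
Qed.

Lemma cvg_series_geom_pmf1BX {s : R} : 0 <= s <= 1 ->
  series (fun m => geom_pmf p m.+1 * (1 - s ^+ m.+1)) @ \oo -->
  1 - marshall_olkin p s.
Proof.
move=> hs.
have -> : series (fun m => geom_pmf p m.+1 * (1 - s ^+ m.+1)) =
    series (fun m => geom_pmf p m.+1) \-
    series (fun m => geom_pmf p m.+1 * s ^+ m.+1).
  apply/funext => n; rewrite /series /= -sumrB.
  by apply: eq_bigr => m _; rewrite mulrBr mulr1.
apply: cvgB; [exact: cvg_series_geom_pmf | exact: cvg_series_geom_pmfX].
Qed.

End GeometricSeries.

Lemma set_lt_bigmin {T : Type} {R : realDomainType} (n : nat) (i0 : 'I_n)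
    (f : 'I_n -> T -> R) (t : R) :
  [set w | t < \big[Num.min/f i0 w]_(i < n) f i w] =
  \bigcap_(i in [set: 'I_n]) [set w | t < f i w].
Proof.
apply/seteqP; split => w /=; first by move=> /bigmin_gtP[_ + i _]; apply.
by move=> ft; apply/bigmin_gtP; split => [|i _]; apply: ft.
Qed.

Lemma measurable_preimage {d1 d2 : measure_display} {T1 : measurableType d1}
    {T2 : measurableType d2} (f : T1 -> T2) (B : set T2) :
  measurable_fun setT f -> measurable B -> measurable (f @^-1` B).
Proof. by move=> mf mB; rewrite -(setTI (_ @^-1` _)); exact: mf. Qed.

Section ProbabilityFacts.
Context {R : realType} {d : measure_display} {T : measurableType d}.
Variable P : probability T R.

Lemma mutually_independent_uniq {J : eqType} {F : J -> set (set T)}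
    (s : seq J) (E : J -> set T) :
  mutually_independent P F -> uniq s -> (forall k, k \in s -> F k (E k)) ->
  P (\bigcap_(k in [set k | k \in s]) E k) = (\prod_(k <- s) P (E k))%E.
Proof.
move=> indep; case: s => [_ _|k0 s' us sF].
  rewrite big_nil -(probability_setT P); congr (P _).
  by apply/seteqP; split => // w _ k /=; rewrite in_nil.
set s := k0 :: s' in us sF *.
have inj_nth : injective (fun m : 'I_(size s) => nth k0 s m).
  by move=> m1 m2 /eqP; rewrite nth_uniq // => /eqP/val_inj.
rewrite (big_nth k0) big_mkord.
rewrite -(indep _ _ inj_nth (fun m => E (nth k0 s m))); last first.
  by move=> m; apply: sF; exact: mem_nth.
congr (P _); apply/seteqP; split => w /= Ew.
  by move=> m _; apply: Ew; exact: mem_nth.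
move=> k ks; have ik : (index k s < size s)%N by rewrite index_mem.
by have := Ew (Ordinal ik) I; rewrite /= nth_index.
Qed.

Lemma probability_bigcup_series {F : nat -> set T} {g : nat -> R} {l : R} :
  (forall n, P (F n) = (g n)%:E) -> series g @ \oo --> l ->
  (forall n, measurable (F n)) -> trivIset setT F ->
  P (\bigcup_n F n) = l%:E.
Proof.
move=> PF gl mF tF.
have := @measure_sigma_additive _ _ _ P F mF tF.
have -> : (fun n => \sum_(0 <= i < n) P (F i)) = EFin \o series g.
  apply/funext => n /=; rewrite /series /=.
  by under eq_bigr do rewrite PF; rewrite sumEFin.
move/(cvg_lim (@ereal_hausdorff R)) => <-.
by apply: cvg_lim; [exact: ereal_hausdorff | apply: cvg_EFin; [exact: nearW|]].
Qed.

Lemma probability_fin_bounds {A : set T} {x : R} :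
  measurable A -> P A = x%:E -> 0 <= x <= 1.
Proof.
move=> mA PA; have A0 : (0 <= P A)%E := measure_ge0 P A.
by move: A0 (probability_le1 P mA); rewrite PA !lee_fin => -> ->.
Qed.

Lemma probability_setD (A B : set T) : measurable A -> measurable B ->
  P (A `\` B) = (P A - P (A `&` B))%E.
Proof.
by move=> mA mB; rewrite measureD // (le_lt_trans (probability_le1 P mA)) ?ltry.
Qed.

Lemma probability_geometric {N : T -> nat} {p : R} :
  0 < p <= 1 -> (forall n, measurable (N @^-1` [set n])) ->
  (forall n, P (N @^-1` [set n.+1]) = (p * (1 - p) ^+ n)%:E) ->
  forall n, P (N @^-1` [set n]) = (geom_pmf p n)%:E.
Proof.
move=> hp mN PN [|n] //=.
have mpos : measurable (\bigcup_n N @^-1` [set n.+1]).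
  exact: bigcupT_measurable.
have -> : N @^-1` [set 0%N] = ~` \bigcup_n N @^-1` [set n.+1].
  apply/seteqP; split => w /=; first by move=> N0 [n _]; rewrite /= N0.
  by case Nw : (N w) => [//|n] nNw; exfalso; apply: nNw; exists n; rewrite //= Nw.
rewrite probability_setC //.
rewrite (probability_bigcup_series PN (cvg_series_geom_pmf hp)) ?subee //.
by move=> m n _ _ [w [/= -> []]].
Qed.

End ProbabilityFacts.

Section Blocks.
Context {R : realType} {d : measure_display} {Omega : measurableType d}.
Variables (P : probability Omega R) (theta : nat)
  (N : 'I_theta -> Omega -> nat) (X : 'I_theta -> nat -> Omega -> R).
Hypothesis mN : forall i n, measurable (N i @^-1` [set n]).
Hypothesis mX : forall i j, measurable_fun setT (X i j).

Definition sample_events (k : 'I_theta + 'I_theta * nat) : set (set Omega) :=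
  match k with
  | inl i => events_nat (N i)
  | inr ij => events_real (X ij.1 ij.2)
  end.

Definition block_event (U : set R) i a b : set Omega :=
  N i @^-1` [set a] `&` \bigcap_(j in [set j | (j < b)%N]) X i j @^-1` U.

Lemma measurable_block_event U i a b :
  measurable U -> measurable (block_event U i a b).
Proof.
move=> mU; apply: measurableI => //.
by apply: bigcap_measurableType => j _; exact: measurable_preimage (mX i j) mU.
Qed.

Section BlockLaw.
Variables (U : set R) (s : R) (pN : nat -> R).
Hypothesis mU : measurable U.

(* [Z] behaves like an event of probability [K] independent of block [i], as far
   as block events can tell: this is all the independence the argument uses. *)
Definition indep_block i (Z : set Omega) (K : R) :=
  forall a b, P (Z `&` block_event U i a b) = (K * (pN a * s ^+ b))%:E.

Lemma probability_block_series i (E Z : set Omega) (K q : R) (g : nat -> R) :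
  pN 0 = 0 -> series g @ \oo --> q ->
  measurable E -> measurable Z -> indep_block i Z K ->
  (forall m, P (Z `&` (N i @^-1` [set m.+1] `&` E)) = (K * g m)%:E) ->
  P (Z `&` E) = (K * q)%:E.
Proof.
move=> pN0 gq mE mZ ZK PZE.
pose h m := if m is m'.+1 then K * g m' else 0.
have -> : Z `&` E = \bigcup_m (Z `&` (N i @^-1` [set m] `&` E)).
  apply/seteqP; split => [w [Zw Ew]|w [m _ [Zw [_ Ew]]]] //.
  by exists (N i w).
have mZNE m : measurable (Z `&` (N i @^-1` [set m] `&` E)).
  by apply: measurableI => //; exact: measurableI.
apply: (probability_bigcup_series P (g := h)) => //.
- case=> [|m]; last exact: PZE.
  apply/eqP; rewrite eq_le measure_ge0 andbT.
  rewrite [leRHS](_ : _ = P (Z `&` block_event U i 0 0)); last first.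
    by rewrite ZK pN0 mul0r mulr0.
  apply: le_measure; rewrite ?inE //.
    by apply: measurableI => //; exact: measurable_block_event.
  by move=> w [Zw [N0 _]]; split => //; split => // j.
- rewrite -(cvg_shiftS (series h)).
  have -> : (fun n => series h n.+1) = (fun n => K * series g n).
    by apply/funext => n; rewrite /series /= big_nat_recl //= add0r big_distrr.
  exact: cvgM (cvg_cst K) gq.
- by move=> m n _ _ [w [[_ [/= <- _]] [_ [/= <- _]]]].
Qed.

Hypothesis indep : mutually_independent P sample_events.
Hypothesis PXU : forall i j, P (X i j @^-1` U) = s%:E.
Hypothesis PN : forall i a, P (N i @^-1` [set a]) = (pN a)%:E.

Lemma probability_bigcap_block_event (a b : 'I_theta -> nat) :
  P (\bigcap_(i in [set: 'I_theta]) block_event U i (a i) (b i)) =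
  (\prod_(i < theta) (pN (a i) * s ^+ b i))%:E.
Proof.
pose samples : seq ('I_theta + 'I_theta * nat) :=
  [seq inr (i, j) | i <- index_enum 'I_theta, j <- index_iota 0 (b i)].
pose ks := map inl (index_enum 'I_theta) ++ samples.
pose Ek k := match k with
  | inl i => N i @^-1` [set a i]
  | inr ij => X ij.1 ij.2 @^-1` U
  end.
have in_ks_inl i : inl i \in ks by rewrite mem_cat map_f ?mem_index_enum.
have in_ks_inr i j : (inr (i, j) \in ks) = (j < b i)%N.
  rewrite mem_cat; apply/orP/idP => [|jb].
    case=> [/mapP[] // | /allpairsPdep[i' [j' [_]]]].
    by rewrite mem_index_iota => /andP[_ jb] [-> ->].
  right; apply/allpairsPdep; exists i, j.
  by rewrite mem_index_enum mem_index_iota.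
have uniq_ks : uniq ks.
  rewrite cat_uniq map_inj_uniq ?index_enum_uniq //=; last by move=> ? ? [].
  apply/andP; split.
    by apply/hasPn => _ /allpairsPdep[i [j [_ _ ->]]]; apply/mapP => -[].
  apply: allpairs_uniq_dep => [|i _|]; rewrite ?index_enum_uniq ?iota_uniq //.
  by move=> [i j] [i' j'] _ _ [-> ->].
have ks_events k : k \in ks -> sample_events k (Ek k).
  by case: k => [i|[i j]] _; [exists [set a i] | exists U].
have -> : \bigcap_(i in [set: 'I_theta]) block_event U i (a i) (b i) =
    \bigcap_(k in [set k | k \in ks]) Ek k.
  apply/seteqP; split => w /= Bw.
    case=> [i|[i j]] /=; first by case: (Bw i I).
    by rewrite in_ks_inr => jb; case: (Bw i I) => _; apply.
  move=> i _; split; first exact: (Bw (inl i) (in_ks_inl i)).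
  by move=> j /= jb; apply: (Bw (inr (i, j))); rewrite /= in_ks_inr.
rewrite (mutually_independent_uniq P ks Ek indep uniq_ks ks_events).
rewrite big_cat big_map big_allpairs_dep /= -big_split -prodEFin /=.
apply: eq_bigr => i _; rewrite PN EFinM; congr (_ * _)%E.
by under eq_bigr do rewrite PXU; rewrite prodEFin prodr_const_nat subn0.
Qed.

Section Replacement.
Variables (E : 'I_theta -> set Omega) (q : R).
Hypothesis mE : forall i, measurable (E i).
Hypothesis PE : forall i Z K, measurable Z -> indep_block i Z K ->
  P (Z `&` E i) = (K * q)%:E.

Let mixed k (a b : 'I_theta -> nat) (i : 'I_theta) :=
  if (i < k)%N then E i else block_event U i (a i) (b i).

Lemma probability_bigcap_mixed k a b : (k <= theta)%N ->
  P (\bigcap_(i in [set: 'I_theta]) mixed k a b i) =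
  (q ^+ k * \prod_(i < theta | (k <= i)%N) (pN (a i) * s ^+ b i))%:E.
Proof.
elim: k a b => [|k IH] a b kt.
  rewrite expr0 mul1r -probability_bigcap_block_event.
  by congr (P _); apply: eq_bigcapr => i _.
pose kk := Ordinal kt.
pose Z := \bigcap_(i in [set: 'I_theta] `\ kk) mixed k.+1 a b i.
have mZ : measurable Z.
  apply: fin_bigcap_measurable => [|i _]; first exact: finite_finset.
  by rewrite /mixed; case: ifP => _; [exact: mE | exact: measurable_block_event].
have -> : \bigcap_(i in [set: 'I_theta]) mixed k.+1 a b i = Z `&` E kk.
  by rewrite (bigcap_setD1 kk) // setIC /mixed /= ltnSn.
pose K := q ^+ k * \prod_(i < theta | (k < i)%N) (pN (a i) * s ^+ b i).
rewrite (PE kk Z K mZ).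
  by rewrite exprSr mulrAC.
(* The induction hypothesis, with the indices of block [kk] changed, is exactly
   the statement that [Z] is independent of block [kk]. *)
move=> a' b'; rewrite /K.
pose a2 i := if i == kk then a' else a i.
pose b2 i := if i == kk then b' else b i.
have -> : Z `&` block_event U kk a' b' =
    \bigcap_(i in [set: 'I_theta]) mixed k a2 b2 i.
  rewrite [RHS](bigcap_setD1 kk) // setIC; congr (_ `&` _).
    by rewrite /mixed /a2 /b2 /= ltnn eqxx.
  apply: eq_bigcapr => i [_ /eqP ikk].
  have ik : (val i == k) = false.
    by apply: contraNF ikk => /eqP ik; apply/eqP/val_inj.
  by rewrite /mixed /a2 /b2 (negbTE ikk) ltnS leq_eqVlt ik.
rewrite IH ?(ltnW kt) //; congr EFin.
rewrite (bigD1 kk) //= /a2 /b2 eqxx -mulrA [_ * (pN a' * _)]mulrC.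
congr (_ * (_ * _)); apply: eq_big => [i|i /andP[_ /negbTE ->]] //.
by rewrite ltn_neqAle andbC -val_eqE eq_sym.
Qed.

Lemma probability_bigcap_replaced :
  P (\bigcap_(i in [set: 'I_theta]) E i) = (q ^+ theta)%:E.
Proof.
have := probability_bigcap_mixed theta (fun=> 0%N) (fun=> 0%N) (leqnn theta).
rewrite big_pred0 ?mulr1 => [<-|i]; last by rewrite leqNgt ltn_ord.
by congr (P _); apply: eq_bigcapr => i _; rewrite /mixed ltn_ord.
Qed.

End Replacement.

End BlockLaw.

Arguments probability_block_series {U s pN} mU {i E Z K q g}.
Arguments probability_bigcap_replaced {U s pN} mU indep PXU PN {E q}.

Section Extremes.
Hypothesis indep : mutually_independent P sample_events.
Variables (p S t : R).
Hypothesis hp : 0 < p <= 1.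
Hypothesis hS : 0 <= S <= 1.
Hypothesis PN : forall i n, P (N i @^-1` [set n]) = (geom_pmf p n)%:E.
Hypothesis PXgt : forall i j, P (X i j @^-1` [set x | t < x]) = S%:E.

Let Ugt := [set x : R | t < x].
Let Ule := [set x : R | x <= t].

Let mUgt : measurable Ugt. Proof. by rewrite /Ugt -set_itvoy. Qed.
Let mUle : measurable Ule. Proof. by rewrite /Ule -set_itvNyc. Qed.

Let PXle i j : P (X i j @^-1` Ule) = (1 - S)%:E.
Proof.
have -> : X i j @^-1` Ule = ~` (X i j @^-1` Ugt).
  by apply/seteqP; split => w; rewrite /Ule /Ugt /= leNgt => /negP.
by rewrite probability_setC ?PXgt //; exact: measurable_preimage (mX i j) mUgt.
Qed.

Definition min_event i := [set w | t < min_upto (fun j => X i j w) (N i w)].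
Definition max_event i := [set w | t < max_upto (fun j => X i j w) (N i w)].

Lemma min_eventE i :
  min_event i = \bigcup_n (X i 0 @^-1` Ugt `&` block_event Ugt i n n).
Proof.
apply/seteqP; split => w; rewrite /min_event /min_upto /=.
  move=> /bigmin_gtP[t0 tj]; exists (N i w) => //; split => //; split => // j jn.
  exact: (tj (Ordinal jn)).
move=> [n _ [t0 [/= -> tj]]]; apply/bigmin_gtP; split => // j _.
exact: (tj j (ltn_ord j)).
Qed.

Lemma max_eventE i :
  max_event i = ~` \bigcup_n (X i 0 @^-1` Ule `&` block_event Ule i n n).
Proof.
apply/seteqP; split => w; rewrite /max_event /max_upto /= ltNge.
  move=> /negP tw [n _ [t0 [/= Nw tj]]]; apply: tw; rewrite Nw.
  by apply/bigmax_leP; split => // j _; exact: (tj j (ltn_ord j)).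
move=> nw; apply/negP => /bigmax_leP[t0 tj]; apply: nw; exists (N i w) => //.
by split => //; split => // j jn; exact: (tj (Ordinal jn)).
Qed.

Lemma measurable_min_event i : measurable (min_event i).
Proof.
rewrite min_eventE; apply: bigcupT_measurable => n.
apply: measurableI; first exact: measurable_preimage (mX i 0) mUgt.
exact: measurable_block_event.
Qed.

Lemma measurable_max_event i : measurable (max_event i).
Proof.
rewrite max_eventE; apply/measurableC/bigcupT_measurable => n.
apply: measurableI; first exact: measurable_preimage (mX i 0) mUle.
exact: measurable_block_event.
Qed.

Lemma min_event_indep_block i Z K : measurable Z ->
  indep_block Ugt S (geom_pmf p) i Z K ->
  P (Z `&` min_event i) = (K * marshall_olkin p S)%:E.
Proof.
move=> mZ ZK.
apply: (probability_block_series mUgt _ (cvg_series_geom_pmfX hp hS)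
  (measurable_min_event i) mZ ZK) => // m.
have -> : N i @^-1` [set m.+1] `&` min_event i = block_event Ugt i m.+1 m.+1.
  rewrite min_eventE; apply/seteqP; split => w.
    move=> [/= Nw [n _ [_ [/= Nwn Bw]]]].
    by rewrite /block_event -Nw Nwn; split.
  move=> [/= Nw Bw]; split => //; exists m.+1 => //.
  split; first exact: (Bw 0%N isT).
  by rewrite /block_event; split.
exact: ZK.
Qed.

Lemma max_event_indep_block i Z K : measurable Z ->
  indep_block Ule (1 - S) (geom_pmf p) i Z K ->
  P (Z `&` max_event i) = (K * (1 - marshall_olkin p (1 - S)))%:E.
Proof.
move=> mZ ZK.
have hS' : 0 <= 1 - S <= 1 by case/andP: hS => S0 S1; apply/andP; split; lra.
apply: (probability_block_series mUle _ (cvg_series_geom_pmf1BX hp hS')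
  (measurable_max_event i) mZ ZK) => // m.
have mB n : measurable (block_event Ule i m.+1 n).
  exact: measurable_block_event.
have -> : N i @^-1` [set m.+1] `&` max_event i =
    block_event Ule i m.+1 0 `\` block_event Ule i m.+1 m.+1.
  rewrite max_eventE; apply/seteqP; split => w /=.
    move=> [Nw nU]; split; first by rewrite /block_event; split.
    move=> B; apply: nU; exists m.+1 => //; split => //.
    by case: B => _ Bj; exact: (Bj 0%N isT).
  move=> [[/= Nw _] nB]; split => // -[n _ [_ [/= Nwn Bj]]]; apply: nB.
  by rewrite /block_event -Nw Nwn; split.
rewrite setIDA probability_setD; [|exact: measurableI|exact: mB].
rewrite -setIA [block_event _ _ _ 0 `&` _]setIidr; last first.
  by move=> w [Nw _]; rewrite /block_event; split.
by rewrite !ZK -EFinB; congr EFin; ring.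
Qed.

Lemma probability_bigcap_min_event :
  P (\bigcap_(i in [set: 'I_theta]) min_event i) =
  (marshall_olkin p S ^+ theta)%:E.
Proof.
apply: (probability_bigcap_replaced mUgt indep PXgt PN measurable_min_event).
exact: min_event_indep_block.
Qed.

Lemma probability_bigcap_max_event :
  P (\bigcap_(i in [set: 'I_theta]) max_event i) =
  ((1 - marshall_olkin p (1 - S)) ^+ theta)%:E.
Proof.
apply: (probability_bigcap_replaced mUle indep PXle PN measurable_max_event).
exact: max_event_indep_block.
Qed.

End Extremes.
End Blocks.

Theorem proposition1 (R : realType) (d : measure_display) (Omega : measurableType d)
  (P : probability Omega R) (G : R -> R) (theta : nat) (htheta : (0 < theta)%N)
  (lambda p : R) (N : 'I_theta -> Omega -> nat) (X : 'I_theta -> nat -> Omega -> R) :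
  is_cdf G -> lambda != 0 ->
  0 < p <= 1 ->
  (forall i (n : nat), measurable (N i @^-1` [set n])) ->
  (forall i j, measurable_fun setT (X i j)) ->
  (forall i (n : nat), P (N i @^-1` [set n.+1]) = (p * (1 - p) ^+ n)%:E) ->
  (forall i j (t : R), P [set w | t < X i j w] = (PG_surv G lambda t)%:E) ->
  mutually_independent P
    (fun k : 'I_theta + ('I_theta * nat) =>
       match k with
       | inl i => events_nat (N i)
       | inr ij => events_real (X ij.1 ij.2)
       end) ->
  let i0 := Ordinal htheta in
  let W := fun i w => min_upto (fun j => X i j w) (N i w) in
  let V := fun i w => max_upto (fun j => X i j w) (N i w) in
  (forall alpha : R, 0 < alpha <= 1 -> p = alpha ->
     forall t : R,
       P [set w | t < \big[Num.min/W i0 w]_(i < theta) W i w]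
       = (GMOP_surv G theta alpha lambda t)%:E) /\
  (forall alpha : R, 1 < alpha -> p = alpha^-1 ->
     forall t : R,
       P [set w | t < \big[Num.min/V i0 w]_(i < theta) V i w]
       = (GMOP_surv G theta alpha lambda t)%:E).
Proof.
move=> _ l0 hp mN mX PN1 PX indep i0 W V.
have PN i := probability_geometric P hp (mN i) (PN1 i).
have PG_surv01 t : 0 <= PG_surv G lambda t <= 1.
  apply: (probability_fin_bounds P _ (PX i0 0%N t)).
  apply: (measurable_preimage _ [set x | t < x] (mX i0 0%N)).
  by rewrite -set_itvoy.
split=> alpha halpha palpha t; rewrite set_lt_bigmin GMOP_survE //.
  by rewrite -palpha; apply: probability_bigcap_min_event => // i j; exact: PX.
rewrite -marshall_olkin_complement ?(lt_trans ltr01) // -palpha.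
by apply: probability_bigcap_max_event => // i j; exact: PX.
Qed.
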